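(* Let $V$ be a real vector space of dimension $2m$ with a positive definite symmetric bilinear form $d$ and a real-linear $J$ with $J^2=-1$ and $d(Ju,Jv)=d(u,v)$ for all $u,v$. Let $V_{\mathbb C}=V\otimes_{\mathbb R}\mathbb C$ with conjugation $w\mapsto\bar w$, and extend $d$ complex-bilinearly and real-linear operators complex-linearly to $V_{\mathbb C}$. Let $W\le V_{\mathbb C}$ be an admissible polarization, i.e. a complex subspace with $W\cap\overline W=\{0\}$, $W\oplus\overline W=V_{\mathbb C}$, and $d(w_1,w_2)=0$ for all $w_1,w_2\in W$; let $J_W\in\operatorname{End}_{\mathbb R}(V)$ be the (orthogonal, $J_W^2=-1$) operator with $W=\{\tfrac12(u-iJ_Wu):u\in V\}$, and let $W_J:=\{\tfrac12(u-iJu):u\in V\}$. Consider the complex-linear operator $B:=\tfrac12(1-J_WJ)$ on the Hilbert space $V_{\mathbb C}$ with inner product $\langle\langle w_1|w_2\rangle\rangle:=2d(\bar w_1,w_2)$. Then the adjoint of $B$ is $B^\dagger=\tfrac12(1-JJ_W)$, and $$\ker B=\ker B^\dagger=(W\cap\overline{W_J})\oplus(\overline W\cap W_J).$$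
   Context: For every admissible polarization $W$ (as defined in the claim) there is a unique real-linear $J_W$ on $V$ with $W=\{\tfrac12(u-iJ_Wu):u\in V\}$; it satisfies $J_W^2=-1$ and is orthogonal for $d$. *)

(* real closed field R (e.g. the reals), C := R[i]. *)
From HB Require Import structures.
From mathcomp Require Import all_boot all_order all_algebra.
From mathcomp Require Import complex.
Set Implicit Arguments. Unset Strict Implicit. Unset Printing Implicit Defensive.
Import Order.TTheory GRing.Theory Num.Theory.
Local Open Scope ring_scope.
Local Open Scope complex_scope.

(* V = R^n (column vectors 'cV[R]_n), V_C = C^n = 'cV[R[i]]_n.
   Real-linear operators on V are matrices 'M[R]_n acting on the left. *)

Definition cplx (R : rcfType) (p q : nat) (A : 'M[R]_(p, q)) : 'M[R[i]]_(p, q) :=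
  map_mx (fun x : R => x%:C) A.

Definition conjv (R : rcfType) (n : nat) (w : 'cV[R[i]]_n) : 'cV[R[i]]_n :=
  map_mx (@conjc R) w.

Definition dform (R : rcfType) (n : nat) (D : 'M[R]_n) (u v : 'cV[R]_n) : R :=
  (u^T *m D *m v) 0 0.

Definition dformC (R : rcfType) (n : nat) (D : 'M[R]_n) (w1 w2 : 'cV[R[i]]_n) : R[i] :=
  (w1^T *m cplx D *m w2) 0 0.

Definition hip (R : rcfType) (n : nat) (D : 'M[R]_n) (w1 w2 : 'cV[R[i]]_n) : R[i] :=
  2 * dformC D (conjv w1) w2.

Definition conjset (R : rcfType) (n : nat) (S : 'cV[R[i]]_n -> Prop) : 'cV[R[i]]_n -> Prop :=
  fun w => S (conjv w).

Definition polset (R : rcfType) (n : nat) (K : 'M[R]_n) : 'cV[R[i]]_n -> Prop :=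
  fun w => exists u : 'cV[R]_n, w = 2^-1 *: (cplx u - 'i *: cplx (K *m u)).

Definition complex_subspace (R : rcfType) (n : nat) (W : 'cV[R[i]]_n -> Prop) : Prop :=
  W 0 /\ (forall (a : R[i]) (x y : 'cV[R[i]]_n), W x -> W y -> W (a *: x + y)).

Definition admissible_polarization (R : rcfType) (n : nat) (D : 'M[R]_n)
    (W : 'cV[R[i]]_n -> Prop) : Prop :=
  [/\ complex_subspace W,
      (forall w, W w -> conjset W w -> w = 0),
      (forall w, exists a b, W a /\ conjset W b /\ w = a + b) &
      (forall w1 w2, W w1 -> W w2 -> dformC D w1 w2 = 0)].

From HB Require Import structures.
From mathcomp Require Import all_boot all_order all_algebra.
From mathcomp Require Import complex.
Set Implicit Arguments. Unset Strict Implicit. Unset Printing Implicit Defensive.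
Import Order.TTheory GRing.Theory Num.Theory.
Local Open Scope ring_scope.

(* Over V_C, J and J_W square to -1, so V_C splits into their (+i)- and
   (-i)-eigenspaces: W, conj W are those of J_W and W_J, conj W_J those of J.
   An operator K with K^2 = -1 preserving d is d-skew (K^T D = - D K), which
   gives the adjoint of 1 - J_W J as 1 - J J_W.  Moreover J_W J w = w iff
   (J + J_W) w = 0, a condition symmetric in J and J_W, so B and its adjoint
   have the same kernel; on that kernel J acts as -J_W, hence the J_W-eigen
   components (w -+ i J_W w)/2 of w are J-eigenvectors for the opposite
   eigenvalue. *)

Section EigenProjection.
Variables (F : numFieldType) (n : nat).
Implicit Types (K P Q : 'M[F]_n) (w : 'cV[F]_n).

Lemma sqr_mulmx K w : K *m K = - 1%:M -> K *m (K *m w) = - w.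
Proof. by move=> sqrK; rewrite mulmxA sqrK mulNmx mul1mx. Qed.

Definition eigproj K (c : F) : 'M[F]_n := 2^-1 *: (1%:M - c *: K).

Lemma eigprojE K c w : eigproj K c *m w = 2^-1 *: (w - c *: (K *m w)).
Proof. by rewrite -scalemxAl mulmxBl mul1mx -scalemxAl. Qed.

Lemma eigproj_add_opp K c w : eigproj K c *m w + eigproj K (- c) *m w = w.
Proof.
rewrite !eigprojE -scalerDr scaleNr opprK addrACA addNr addr0 -mulr2n.
by rewrite -scaler_nat scalerA mulVf ?scale1r ?pnatr_eq0.
Qed.

Lemma eigproj_swap P Q c w :
  P *m w + Q *m w = 0 -> eigproj P c *m w = eigproj Q (- c) *m w.
Proof.
move=> /eqP; rewrite addrC addr_eq0 => /eqP Qw.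
by rewrite !eigprojE Qw scaleNr scalerN opprK.
Qed.

Section SquareRootOfMinusOne.
Variables (K : 'M[F]_n) (c : F).
Hypotheses (sqrK : K *m K = - 1%:M) (sqr_c : c ^+ 2 = -1).

Lemma eigproj_eigen w : K *m (eigproj K c *m w) = c *: (eigproj K c *m w).
Proof.
rewrite eigprojE -scalemxAr mulmxBr -scalemxAr sqr_mulmx // scalerN opprK.
rewrite [RHS]scalerA mulrC -scalerA; congr (_ *: _).
by rewrite scalerBr scalerA -expr2 sqr_c scaleN1r opprK addrC.
Qed.

Lemma eigproj_id w : K *m w = c *: w -> eigproj K c *m w = w.
Proof.
move=> Kw; rewrite eigprojE Kw scalerA -expr2 sqr_c scaleN1r opprK -mulr2n.
by rewrite -scaler_nat scalerA mulVf ?scale1r ?pnatr_eq0.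
Qed.

Lemma eigproj_opp_eq0 w : K *m w = - c *: w -> eigproj K c *m w = 0.
Proof.
move=> Kw; rewrite eigprojE Kw scalerA mulrN -expr2 sqr_c opprK scale1r.
by rewrite subrr scaler0.
Qed.

End SquareRootOfMinusOne.

Lemma eigvec_opp_eq0 K (c : F) w :
  c != 0 -> K *m w = c *: w -> K *m w = - c *: w -> w = 0.
Proof.
move=> c0 -> /eqP; rewrite scaleNr -subr_eq0 opprK -scalerDl scaler_eq0.
by case/orP=> [|/eqP //]; rewrite -mulr2n mulrn_eq0 /= (negPf c0).
Qed.

Lemma ker_half_sub_mulP P Q w :
  P *m P = - 1%:M -> (2^-1 *: (1%:M - P *m Q)) *m w = 0 <-> P *m w + Q *m w = 0.
Proof.
move=> sqrP; rewrite -scalemxAl mulmxBl mul1mx -mulmxA; split.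
  move=> /eqP; rewrite scaler_eq0 invr_eq0 pnatr_eq0 /= subr_eq0 => /eqP {1}->.
  by rewrite sqr_mulmx // addNr.
move=> /eqP; rewrite addrC addr_eq0 => /eqP ->.
by rewrite mulmxN sqr_mulmx // opprK subrr scaler0.
Qed.

Lemma ker_add_eigen_decomposition P Q (c : F) w :
  P *m P = - 1%:M -> Q *m Q = - 1%:M -> c ^+ 2 = -1 ->
  P *m w + Q *m w = 0 <->
  exists a b, (P *m a = c *: a /\ Q *m a = - c *: a) /\
              (P *m b = - c *: b /\ Q *m b = c *: b) /\ w = a + b.
Proof.
move=> sqrP sqrQ sqr_c; have sqrNc : (- c) ^+ 2 = -1 by rewrite sqrrN.
split=> [PQw | [a [b [[Pa Qa] [[Pb Qb] ->]]]]].
  exists (eigproj P c *m w), (eigproj P (- c) *m w); split; last split.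
  - split; first exact: eigproj_eigen.
    by rewrite (eigproj_swap c PQw); exact: eigproj_eigen.
  - split; first exact: eigproj_eigen.
    by rewrite (eigproj_swap (- c) PQw) opprK; exact: eigproj_eigen.
  - by rewrite eigproj_add_opp.
by rewrite !mulmxDr Pa Qa Pb Qb !scaleNr addrACA subrr addNr addr0.
Qed.

End EigenProjection.

Section Complexification.
Variable R : rcfType.

Lemma cplxM p q r (A : 'M[R]_(p, q)) (B : 'M[R]_(q, r)) :
  cplx (A *m B) = cplx A *m cplx B.
Proof. exact: map_mxM. Qed.

Lemma cplxT p q (A : 'M[R]_(p, q)) : cplx A^T = (cplx A)^T.
Proof. exact/esym/map_trmx. Qed.

Lemma cplx_sqr_eqN1 n (K : 'M[R]_n) :
  K *m K = - 1%:M -> cplx K *m cplx K = - 1%:M.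
Proof. by move=> HK; rewrite -cplxM HK /cplx map_mxN map_mx1. Qed.

Lemma cplx_half_sub_mul n (P Q : 'M[R]_n) :
  cplx (2^-1 *: (1%:M - P *m Q)) = 2^-1 *: (1%:M - cplx P *m cplx Q).
Proof.
by rewrite /cplx map_mxZ map_mxB map_mx1 map_mxM fmorphV rmorph_nat.
Qed.

Lemma conjvK n : involutive (@conjv R n).
Proof. by move=> w; apply/matrixP => i j; rewrite !mxE conjcK. Qed.

Lemma conjvZ n (a : R[i]) (w : 'cV[R[i]]_n) : conjv (a *: w) = a^* *: conjv w.
Proof. exact: map_mxZ. Qed.

Lemma conjv_cplxM n (A : 'M[R]_n) (w : 'cV[R[i]]_n) :
  conjv (cplx A *m w) = cplx A *m conjv w.
Proof.
rewrite /conjv map_mxM; congr (_ *m _).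
by apply/matrixP => i j; rewrite !mxE; exact: conjc_real.
Qed.

End Complexification.

Section Forms.
Variables (R : rcfType) (n : nat).
Implicit Types (D K P Q : 'M[R]_n) (u v : 'cV[R]_n).

Lemma eq_mx_bilinear (M N : 'M[R]_n) :
  (forall u v, (u^T *m M *m v) 0 0 = (u^T *m N *m v) 0 0) -> M = N.
Proof.
move=> MN; apply/matrixP => i j.
by have := MN (delta_mx i 0) (delta_mx j 0); rewrite trmx_delta -!rowE -!colE !mxE.
Qed.

Lemma isometry_trmx_mul D K :
  K *m K = - 1%:M -> (forall u v, dform D (K *m u) (K *m v) = dform D u v) ->
  K^T *m D = - (D *m K).
Proof.
move=> sqrK isoK; have KtDK : K^T *m D *m K = D.
  by apply: eq_mx_bilinear => u v; rewrite -[RHS]isoK /dform trmx_mul !mulmxA.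
have := congr1 (mulmx^~ K) KtDK; rewrite /= -mulmxA sqrK mulmxN mulmx1 => <-.
by rewrite opprK.
Qed.

Lemma trmx_half_sub_mul D P Q :
  P^T *m D = - (D *m P) -> Q^T *m D = - (D *m Q) ->
  (2^-1 *: (1%:M - P *m Q))^T *m D = D *m (2^-1 *: (1%:M - Q *m P)).
Proof.
move=> PtD QtD; rewrite linearZ linearB /= trmx1 trmx_mul -scalemxAl -scalemxAr.
rewrite mulmxBl mulmxBr mul1mx mulmx1 -mulmxA PtD mulmxN mulmxA QtD mulNmx.
by rewrite opprK mulmxA.
Qed.

Lemma hip_adjoint D (A A' : 'M[R]_n) (w1 w2 : 'cV[R[i]]_n) :
  A^T *m D = D *m A' -> hip D (cplx A *m w1) w2 = hip D w1 (cplx A' *m w2).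
Proof.
move=> AtD; rewrite /hip /dformC conjv_cplxM trmx_mul -cplxT -(mulmxA _ _ (cplx D)).
by rewrite -cplxM AtD cplxM !mulmxA.
Qed.

End Forms.

Section Polarization.
Variables (R : rcfType) (n : nat) (K : 'M[R]_n).
Hypothesis sqrK : K *m K = - 1%:M.

Lemma polset_eigenP (w : 'cV[R[i]]_n) : polset K w <-> cplx K *m w = 'i *: w.
Proof.
have sqrKC := cplx_sqr_eqN1 sqrK.
split=> [[u ->] | Kw].
  by rewrite cplxM -(eigprojE (cplx K)) (eigproj_eigen sqrKC (sqrCi _)).
have Kw' : cplx K *m conjv w = - 'i *: conjv w.
  by rewrite -conjv_cplxM Kw conjvZ conjCi.
pose u := map_mx (fun z : R[i] => 2 * complex.Re z) w.
have uE : cplx u = w + conjv w.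
  apply/matrixP => i j; rewrite !mxE /= rmorphM /= ReJ_add rmorph_nat.
  by rewrite mulrC divfK // pnatr_eq0.
exists u; rewrite cplxM -(eigprojE (cplx K)) uE mulmxDr (eigproj_id (sqrCi _) Kw).
by rewrite (eigproj_opp_eq0 (sqrCi _) Kw') addr0.
Qed.

Lemma conjset_polset_eigenP (w : 'cV[R[i]]_n) :
  conjset (polset K) w <-> cplx K *m w = - 'i *: w.
Proof.
rewrite /conjset polset_eigenP; split=> Kw.
  by have := congr1 (@conjv _ _) Kw; rewrite conjv_cplxM conjvZ !conjvK conjCi.
by rewrite -conjv_cplxM Kw conjvZ -conjCi conjCK.
Qed.

End Polarization.

Local Open Scope complex_scope.

Theorem proposition2p8 (R : rcfType) (m : nat)
  (D : 'M[R]_(m.*2)) (J JW : 'M[R]_(m.*2)) (W : 'cV[R[i]]_(m.*2) -> Prop) :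
  (* d symmetric and positive definite *)
  D^T = D ->
  (forall u : 'cV[R]_(m.*2), u != 0 -> 0 < dform D u u) ->
  (* J^2 = -1 and d(Ju,Jv) = d(u,v) *)
  J *m J = - 1%:M ->
  (forall u v, dform D (J *m u) (J *m v) = dform D u v) ->
  (* W admissible polarization *)
  admissible_polarization D W ->
  (* J_W: the orthogonal operator, J_W^2 = -1, with W = {1/2 (u - i J_W u)} *)
  JW *m JW = - 1%:M ->
  (forall u v, dform D (JW *m u) (JW *m v) = dform D u v) ->
  (forall w, W w <-> polset JW w) ->
  let B := cplx (2^-1 *: (1%:M - JW *m J)) in
  let Bdag := cplx (2^-1 *: (1%:M - J *m JW)) in
  let WJ := polset J in
  (* B^dagger = 1/2 (1 - J J_W) *)
  (forall w1 w2 : 'cV[R[i]]_(m.*2), hip D (B *m w1) w2 = hip D w1 (Bdag *m w2)) /\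
  (* ker B = ker B^dagger *)
  (forall w : 'cV[R[i]]_(m.*2), B *m w = 0 <-> Bdag *m w = 0) /\
  (* ker B = (W /\ \bar W_J) + (\bar W /\ W_J) *)
  (forall w : 'cV[R[i]]_(m.*2), B *m w = 0 <->
     exists a b, (W a /\ conjset WJ a) /\ (conjset W b /\ WJ b) /\ w = a + b) /\
  (* ... and this sum is direct *)
  (forall w : 'cV[R[i]]_(m.*2), (W w /\ conjset WJ w) -> (conjset W w /\ WJ w) -> w = 0).
Proof.
move=> _ _ sqrJ isoJ _ sqrJW isoJW W_JW B Bdag WJ.
have sqrJC := cplx_sqr_eqN1 sqrJ; have sqrJWC := cplx_sqr_eqN1 sqrJW.
have kerB (w : 'cV[R[i]]_(m.*2)) : B *m w = 0 <-> cplx JW *m w + cplx J *m w = 0.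
  by rewrite /B cplx_half_sub_mul; exact: ker_half_sub_mulP sqrJWC.
have kerBdag (w : 'cV[R[i]]_(m.*2)) :
    Bdag *m w = 0 <-> cplx J *m w + cplx JW *m w = 0.
  by rewrite /Bdag cplx_half_sub_mul; exact: ker_half_sub_mulP sqrJC.
have W_eig w := iff_trans (W_JW w) (polset_eigenP sqrJW w).
have Wbar_eig w := iff_trans (W_JW (conjv w)) (conjset_polset_eigenP sqrJW w).
have WJ_eig w := polset_eigenP sqrJ w.
have WJbar_eig w := conjset_polset_eigenP sqrJ w.
have JtD := isometry_trmx_mul sqrJ isoJ; have JWtD := isometry_trmx_mul sqrJW isoJW.
split; first by move=> w1 w2; apply/hip_adjoint/trmx_half_sub_mul.
split.
  move=> w; split=> [/kerB | /kerBdag] PQw; [apply/kerBdag | apply/kerB];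
  by rewrite addrC.
split.
  move=> w; apply: (iff_trans (kerB w)).
  apply: (iff_trans (ker_add_eigen_decomposition _ sqrJWC sqrJC (sqrCi _))).
  by split=> -[a [b [[Ha Ha'] [[Hb Hb'] ->]]]]; exists a, b;
    do !split; by [apply/W_eig | apply/Wbar_eig | apply/WJ_eig | apply/WJbar_eig].
move=> w [/W_eig JWw _] [/Wbar_eig JWw' _].
exact: eigvec_opp_eq0 (neq0Ci _) JWw JWw'.
Qed.
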